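(* Let $\vec{G}$ be a DDMOG on $n$ vertices with DDM labeling $g$, and index its vertices as $v_1,\dots,v_n$ so that $g(v_i)=i$. Let $\vec{H}$ be an oriented graph on $m$ vertices, vertex-disjoint from $\vec{G}$, with a bijective labeling $h:V(\vec{H})\to\{n+1,\dots,n+m\}$ such that $k=\max_{v\in V(\vec{H})}|wt_h(v)|\le n$ and, for every $0\le i\le k$, $\sum_{v\in V_h^{i}(\vec{H})}h(v)=\sum_{v\in V_h^{-i}(\vec{H})}h(v)$. Then the weighted sum $\vec{G}\oplus_{wt_h}^0\vec{H}$ is a DDMOG on $n+m$ vertices.
   Context: An oriented graph is a finite digraph without loops such that whenever $(u,v)$ is an arc, $(v,u)$ is not. For a vertex $v$, $N^+(v)=\{x:(x,v)\text{ is an arc}\}$, $N^-(v)=\{x:(v,x)\text{ is an arc}\}$; for a labeling $f$, $wt_f(v)=\sum_{x\in N^+(v)}f(x)-\sum_{x\in N^-(v)}f(x)$. A DDM labeling of an oriented graph on $n$ vertices is a bijection $f:V\to\{1,\dots,n\}$ with $wt_f(v)=0$ for all $v$; a DDMOG is an oriented graph admitting one. For an oriented graph $\vec{H}$ with labeling $h$ and an integer $j$, $V_h^{j}(\vec{H})=\{u\in V(\vec{H}):wt_h(u)=j\}$. Weighted sum: let $\vec{G}$ have vertices $v_1,\dots,v_n$ (indexed by a labeling $g$ with $g(v_i)=i$), let $s\in\mathbb{Z}$, and let $\vec{H}$ (vertex-disjoint from $\vec{G}$) have a labeling $h:V(\vec{H})\to\mathbb{Z}^+$ with $\{|wt_h(u)|:u\in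 V(\vec{H})\}\subseteq\{0\}\cup\{i+s:1\le i\le n\}$. Then $\vec{G}\oplus_{wt_h}^s\vec{H}$ is the oriented graph with vertex set $V(\vec{G})\cup V(\vec{H})$ and arc set $E(\vec{G})\cup E(\vec{H})\cup\bigcup_{i=1}^n(E^i\cup E^{-i})$, where $E^i=\{(v_i,u):u\in V_h^{-i-s}(\vec{H})\}$ and $E^{-i}=\{(u,v_i):u\in V_h^{i+s}(\vec{H})\}$. *)

From mathcomp Require Import all_boot all_order all_algebra.
Set Implicit Arguments. Unset Strict Implicit. Unset Printing Implicit Defensive.
Import GRing.Theory Num.Theory.

Definition oriented (V : finType) (E : rel V) : Prop :=
  (forall v, ~~ E v v) /\ (forall u v, E u v -> ~~ E v u).

Definition wt (V : finType) (E : rel V) (f : V -> nat) (v : V) : int :=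
  (\sum_(x | E x v) (f x)%:Z - \sum_(x | E v x) (f x)%:Z)%R.

Definition DDM_labeling (V : finType) (E : rel V) (f : V -> nat) : Prop :=
  (forall v, 1 <= f v <= #|V|) /\ injective f /\ (forall v, wt E f v = 0%R).

Definition DDMOG (V : finType) (E : rel V) : Prop :=
  oriented E /\ exists f : V -> nat, DDM_labeling E f.

Definition level_set (V : finType) (E : rel V) (h : V -> nat) (j : int) : {set V} :=
  [set u | wt E h u == j].

(* Weighted sum G (+)_{wt_h}^s H on the disjoint union VG + VH; the vertex
   v_i of G is the one with g(v_i) = i. Arc (v_i,u) iff wt_h(u) = -i-s,
   arc (u,v_i) iff wt_h(u) = i+s. *)
Definition wsum (VG VH : finType) (EG : rel VG) (g : VG -> nat) (s : int)
    (EH : rel VH) (h : VH -> nat) : rel (VG + VH) :=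
  fun a b =>
    match a, b with
    | inl x, inl y => EG x y
    | inr x, inr y => EH x y
    | inl v, inr u => wt EH h u == (- ((g v)%:Z + s))%R
    | inr u, inl v => wt EH h u == ((g v)%:Z + s)%R
    end.

(* The new arcs of a vertex
   v_i of G join it to the level sets V_h^i (in) and V_h^-i (out), whose label
   sums agree by hypothesis (both sets are empty when i exceeds k). A vertex u
   of H with wt_h(u) = w gains exactly one new neighbour, v_|w|, on the side
   that contributes -w, because g is a bijection onto {1,...,n} and |w| <= n;
   so its weight becomes w - w = 0. *)
From mathcomp Require Import all_boot all_order all_algebra.
From mathcomp Require Import zify.
Import GRing.Theory Num.Theory.

Local Open Scope ring_scope.

Lemma Posz_sum (I : finType) (P : pred I) (F : I -> nat) :
  (\sum_(i | P i) F i)%N%:Z = \sum_(i | P i) (F i)%:Z.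
Proof. exact: (big_morph Posz PoszD (erefl _)). Qed.

Section WeightedSum.

Variables (VG VH : finType) (EG : rel VG) (g : VG -> nat) (s : int).
Variables (EH : rel VH) (h : VH -> nat).

Notation E := (wsum EG g s EH h).

Lemma wsum_oriented :
  oriented EG -> oriented EH -> (forall v, (g v)%:Z + s != 0) -> oriented E.
Proof.
move=> [EG_irr EG_asym] [EH_irr EH_asym] gs_neq0; split.
  by case=> x /=; [apply: EG_irr | apply: EH_irr].
case=> x [] y /=; try by [apply: EG_asym | apply: EH_asym].
  by apply/contraL => /eqP ->; have := gs_neq0 x; lia.
by apply/contraL => /eqP ->; have := gs_neq0 y; lia.
Qed.

Variable f : VG + VH -> nat.

Lemma wt_wsum_inl v :
  wt E f (inl v) = wt EG (f \o inl) v
    + (\sum_(u | wt EH h u == (g v)%:Z + s) (f (inr u))%:Z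
       - \sum_(u | wt EH h u == - ((g v)%:Z + s)) (f (inr u))%:Z).
Proof. by rewrite [LHS]/wt [wt EG _ _]/wt !big_sumType opprD addrACA. Qed.

Lemma wt_wsum_inr u :
  wt E f (inr u) = wt EH (f \o inr) u
    + (\sum_(v | wt EH h u == - ((g v)%:Z + s)) (f (inl v))%:Z
       - \sum_(v | wt EH h u == (g v)%:Z + s) (f (inl v))%:Z).
Proof. by rewrite [LHS]/wt [wt EH _ _]/wt !big_sumType opprD addrACA addrC. Qed.

End WeightedSum.

Section BijectiveLabeling.

Variables (V : finType) (g : V -> nat).
Hypotheses (g_range : forall v, (1 <= g v <= #|V|)%N) (g_inj : injective g).

Lemma label_surj k : (1 <= k <= #|V|)%N -> exists v, g v = k.
Proof.
move=> k_range.
have uniq_labels : uniq (map g (enum V)) by rewrite map_inj_uniq ?enum_uniq.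
have labels_sub : {subset map g (enum V) <= iota 1 #|V|}.
  by move=> _ /mapP[v _ ->]; rewrite mem_iota; have := g_range v; lia.
have labels_size : (size (iota 1 #|V|) <= size (map g (enum V)))%N.
  by rewrite size_iota size_map -cardE.
have [_ labels_eq] := uniq_min_size uniq_labels labels_sub labels_size.
have : k \in iota 1 #|V| by rewrite mem_iota; lia.
by rewrite -labels_eq => /mapP[v _ ->]; exists v.
Qed.

Lemma sum_label_eq (k : int) :
  \sum_(v | (g v)%:Z == k) (g v)%:Z = if 0 < k <= #|V|%:Z then k else 0.
Proof.
case: ifP => [k_range | k_out].
  have [k' -> /label_surj[v gv]] :
      exists2 k' : nat, k = k'%:Z & (1 <= k' <= #|V|)%N.
    by exists (absz k); lia.
  rewrite (bigD1 v) ?gv //= big1 ?addr0 // => w /andP[+ /negP]; rewrite -gv.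
  by move=> /eqP[/g_inj ->]; rewrite eqxx.
rewrite big1 // => v /eqP gv; move: k_out; rewrite -gv.
by have := g_range v; lia.
Qed.

Lemma sum_label_opp_sub (w : int) : (absz w <= #|V|)%N ->
  \sum_(v | (g v)%:Z == - w) (g v)%:Z - \sum_(v | (g v)%:Z == w) (g v)%:Z = - w.
Proof. by move=> w_bound; rewrite !sum_label_eq; do 2 case: ifP; lia. Qed.

End BijectiveLabeling.

Definition join_label {VG VH : Type} (g : VG -> nat) (h : VH -> nat)
    (x : VG + VH) : nat :=
  match x with inl v => g v | inr u => h u end.

Lemma join_label_range (VG VH : Type) (g : VG -> nat) (h : VH -> nat) n m :
  (forall v, (1 <= g v <= n)%N) -> (forall u, (n < h u <= n + m)%N) ->
  forall x, (1 <= join_label g h x <= n + m)%N.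
Proof.
by move=> g_range h_range [v | u] /=; [have := g_range v | have := h_range u]; lia.
Qed.

Lemma join_label_inj (VG VH : Type) (g : VG -> nat) (h : VH -> nat) n :
  (forall v, (g v <= n)%N) -> (forall u, (n < h u)%N) ->
  injective g -> injective h -> injective (join_label g h).
Proof.
move=> g_le h_gt g_inj h_inj [v | u] [v' | u'] //= eq_label.
- by rewrite (g_inj _ _ eq_label).
- by have := g_le v; have := h_gt u'; lia.
- by have := g_le v'; have := h_gt u; lia.
- by rewrite (h_inj _ _ eq_label).
Qed.

Lemma sum_level_set (V : finType) (E : rel V) (h F : V -> nat) (j : int) :
  (\sum_(u in level_set E h j) F u = \sum_(u | wt E h u == j) F u)%N.
Proof. by apply: eq_bigl => u; rewrite inE. Qed.

Lemma level_sums_balanced (V : finType) (E : rel V) (h : V -> nat) :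
  (forall i : nat, (i <= \max_(u : V) absz (wt E h u))%N ->
     \sum_(u in level_set E h i%:Z) h u = \sum_(u in level_set E h (- i%:Z)) h u) ->
  forall i : nat,
    \sum_(u in level_set E h i%:Z) h u = \sum_(u in level_set E h (- i%:Z)) h u.
Proof.
move=> balanced i.
have [/balanced // | max_lt] := leqP i (\max_(u : V) absz (wt E h u)).
have level_empty (j : int) : absz j = i -> \sum_(u in level_set E h j) h u = 0%N.
  move=> abs_j; rewrite big1 // => u; rewrite inE => /eqP wt_u.
  by move: max_lt; rewrite -abs_j -wt_u ltnNge (leq_bigmax u).
by rewrite !level_empty ?abszN.
Qed.

Section WeightedSumDDM.

Variables (VG VH : finType) (EG : rel VG) (g : VG -> nat).
Variables (EH : rel VH) (h : VH -> nat).
Hypothesis g_DDM : DDM_labeling EG g.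
Hypotheses (h_range : forall u, (#|VG| < h u <= #|VG| + #|VH|)%N) (h_inj : injective h).
Hypothesis wt_h_bound : forall u, (absz (wt EH h u) <= #|VG|)%N.
Hypothesis h_balanced : forall i : nat,
  \sum_(u in level_set EH h i%:Z) h u = \sum_(u in level_set EH h (- i%:Z)) h u.

Notation E := (wsum EG g 0 EH h).
Notation f := (join_label g h).

Lemma wt_wsum_inl_eq0 v : wt E f (inl v) = 0.
Proof.
have [_ [_ wt_g]] := g_DDM.
rewrite wt_wsum_inl [wt EG _ _]wt_g add0r addr0 -!Posz_sum.
by rewrite -!sum_level_set h_balanced subrr.
Qed.

Lemma wt_wsum_inr_eq0 u : wt E f (inr u) = 0.
Proof.
have [g_range [g_inj _]] := g_DDM.
rewrite wt_wsum_inr.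
under eq_bigl => v do rewrite addr0 eq_sym eqr_oppLR.
under [X in _ - X]eq_bigl => v do rewrite addr0 eq_sym.
by rewrite sum_label_opp_sub // subrr.
Qed.

Lemma wsum_DDM_labeling : DDM_labeling E f.
Proof.
have [g_range [g_inj _]] := g_DDM.
split; [|split].
- by move=> x; rewrite card_sum; apply: join_label_range.
- apply: (@join_label_inj _ _ g h #|VG|) => // [v | u].
    by have /andP[] := g_range v.
  by have /andP[] := h_range u.
- by case; [exact: wt_wsum_inl_eq0 | exact: wt_wsum_inr_eq0].
Qed.

Lemma wsum_DDMOG : oriented EG -> oriented EH -> DDMOG E.
Proof.
have [g_range _] := g_DDM.
move=> EG_oriented EH_oriented; split; last by exists f; exact: wsum_DDM_labeling.
by apply: wsum_oriented => // v; rewrite addr0 -lt0n; have /andP[] := g_range v.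
Qed.

End WeightedSumDDM.

Local Close Scope ring_scope.

Theorem theorem6 (VG VH : finType) (n m : nat)
    (EG : rel VG) (g : VG -> nat) (EH : rel VH) (h : VH -> nat) :
  #|VG| = n -> oriented EG -> DDM_labeling EG g ->
  #|VH| = m -> oriented EH ->
  (forall u, n < h u <= n + m) -> injective h ->
  (\max_(u : VH) absz (wt EH h u) <= n)%N ->
  (forall i : nat, (i <= \max_(u : VH) absz (wt EH h u))%N ->
     \sum_(u in level_set EH h i%:Z) h u = \sum_(u in level_set EH h (- i%:Z)%R) h u) ->
  DDMOG (wsum EG g 0%R EH h) /\ #|{: VG + VH}| = n + m.
Proof.
move=> <- EG_oriented g_DDM <- EH_oriented h_range h_inj max_wt_le balanced.
split; last exact: card_sum.
apply: wsum_DDMOG => //.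
- by move=> u; apply: leq_trans max_wt_le; exact: leq_bigmax.
- exact: level_sums_balanced.
Qed.
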